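(* If a semigroup $\langle A;\cdot\rangle$ is an inflation of a subsemigroup which is a rectangular band of periodic commutative groups, and the product of any two idempotents of $A$ is an idempotent, then $\langle A;\cdot\rangle$ is a Hamiltonian algebra.
   Context: A semigroup $\langle T;\cdot\rangle$ is a rectangular band of semigroups $T_{i\lambda}$ if $\{T_{i\lambda}\mid i\in I,\lambda\in\Lambda\}$ is a partition of $T$ into subsemigroups with $T_{i\lambda}\cdot T_{j\mu}\subseteq T_{i\mu}$ for all $i,j\in I$, $\lambda,\mu\in\Lambda$; it is a rectangular band of periodic commutative groups if each $\langle T_{i\lambda};\cdot\rangle$ is a commutative group all of whose elements have finite order. A semigroup $\langle A;\cdot\rangle$ is an inflation of a subsemigroup $\langle B;\cdot\rangle$ if there is a partition $\{X_b\mid b\in B\}$ of $A$ with $b\in X_b$ and $x\cdot y=a\cdot b$ for all $a,b\in B$, $x\in X_a$, $y\in X_b$. An idempotent is $e$ with $ee=e$. Subalgebras of a semigroup are its nonempty subsets closed under $\cdot$; an algebra is called Hamiltonian if the universe of every subalgebra is an equivalence class (block) of some congruence of the algebra. *)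

From Stdlib Require Import Arith.

Section SG.
Context {A : Type} (op : A -> A -> A).

Definition associative_op : Prop :=
  forall x y z, op x (op y z) = op (op x y) z.

(* spow x n = x^(n+1) *)
Fixpoint spow (x : A) (n : nat) : A :=
  match n with 0 => x | S k => op (spow x k) x end.

Definition idempotent (e : A) : Prop := op e e = e.

Definition subalgebra (S : A -> Prop) : Prop :=
  (exists x, S x) /\ (forall x y, S x -> S y -> S (op x y)).

Definition congruence (R : A -> A -> Prop) : Prop :=
  (forall x, R x x) /\ (forall x y, R x y -> R y x) /\
  (forall x y z, R x y -> R y z -> R x z) /\
  (forall x x' y y', R x x' -> R y y' -> R (op x y) (op x' y')).

Definition hamiltonian : Prop :=
  forall S, subalgebra S ->
    exists R, congruence R /\ exists a, forall x, S x <-> R a x.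

Definition periodic_comm_group (T : A -> Prop) : Prop :=
  (forall x y, T x -> T y -> T (op x y)) /\
  exists e, T e /\
    (forall x, T x -> op e x = x /\ op x e = x) /\
    (forall x, T x -> exists y, T y /\ op x y = e /\ op y x = e) /\
    (forall x y, T x -> T y -> op x y = op y x) /\
    (forall x, T x -> exists n, spow x n = e).

(* B (a subsemigroup of A) is a rectangular band of periodic commutative
   groups: B is partitioned into the blocks
   T_{i,l} = {x in B | fi x = i /\ fl x = l} (the nonempty fibres of (fi,fl)),
   with T_{i,l} T_{j,m} ⊆ T_{i,m}, each block a periodic commutative group. *)
Definition rect_band_pcg (B : A -> Prop) : Prop :=
  exists (I L : Type) (fi : A -> I) (fl : A -> L),
    (forall x y, B x -> B y -> fi (op x y) = fi x /\ fl (op x y) = fl y) /\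
    (forall x, B x ->
       periodic_comm_group (fun y => B y /\ fi y = fi x /\ fl y = fl x)).

(* A is an inflation of the subsemigroup B: the partition {X_b | b in B}
   with b in X_b is encoded by the map r with X_b = r^{-1}(b). *)
Definition inflation_of (B : A -> Prop) : Prop :=
  (forall x y, B x -> B y -> B (op x y)) /\
  exists r : A -> A,
    (forall x, B (r x)) /\ (forall b, B b -> r b = b) /\
    (forall x y, op x y = op (r x) (r y)).

End SG.


(* A subsemigroup S is always a union of blocks of its syntactic congruence
   (x ~ y iff u x v and u y v are together in S or not, for all possibly
   empty contexts u, v), and it is a single block as soon as x, y in S and
   u x v in S imply u y v in S.

   Write x' for the retraction of x onto the core B, so that u x v = u' x' v'.
   Periodicity puts the inverse of x' in its group, and the identity of the
   group of any element of S, back into S. Since the idempotents of B form a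
   rectangular band, an idempotent in the middle of a product of elements of
   B can be erased, so y' = x' x'^-1 y' inside any product. Commutativity of
   the groups lets x'^-1 y' be moved past v', whence
   u y v = (u x v) (x'^-1 y') e with e the identity of the group of u x v. *)

Section Semigroup.
Context {A : Type} (op : A -> A -> A).
Local Notation "x ** y" := (op x y) (at level 40, left associativity).
Hypothesis assoc : associative_op op.

Definition in_context (u v : option A) (x : A) : A :=
  match u, v with
  | None, None => x
  | Some u, None => u ** x
  | None, Some v => x ** v
  | Some u, Some v => u ** x ** v
  end.

Definition syntactic_rel (S : A -> Prop) (x y : A) : Prop :=
  forall u v, S (in_context u v x) <-> S (in_context u v y).

Lemma in_context_mulr u v x y :
  in_context u v (x ** y) = in_context u (Some (in_context None v y)) x.
Proof. destruct u, v; simpl; rewrite ?assoc; reflexivity. Qed.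

Lemma in_context_mull u v x y :
  in_context u v (x ** y) = in_context (Some (in_context u None x)) v y.
Proof. destruct u, v; simpl; rewrite ?assoc; reflexivity. Qed.

Lemma syntactic_rel_congruence S : congruence op (syntactic_rel S).
Proof.
  split; [|split; [|split]].
  - intros x u v; reflexivity.
  - intros x y Hxy u v; symmetry; apply Hxy.
  - intros x y z Hxy Hyz u v; rewrite (Hxy u v); apply Hyz.
  - intros x x' y y' Hx Hy u v.
    transitivity (S (in_context u v (x' ** y))).
    + rewrite !in_context_mulr; apply Hx.
    + rewrite !in_context_mull; apply Hy.
Qed.

Lemma hamiltonian_of_context_stable :
  (forall S, subalgebra op S -> forall x y u v,
     S x -> S y -> S (in_context u v x) -> S (in_context u v y)) ->
  hamiltonian op.
Proof.
  intros Hstable S [[s Ss] S_mul].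
  exists (syntactic_rel S); split; [apply syntactic_rel_congruence|].
  exists s; intros x; split.
  - intros Sx u v; split; apply Hstable; auto; split; eauto.
  - intros Hsx; exact (proj1 (Hsx None None) Ss).
Qed.

Lemma spow_closed (P : A -> Prop) b n :
  (forall x y, P x -> P y -> P (x ** y)) -> P b -> P (spow op b n).
Proof. intros P_mul Pb; induction n; simpl; auto. Qed.

Lemma spow_comm b n : b ** spow op b n = spow op b n ** b.
Proof.
  induction n as [|n IH]; simpl; [reflexivity|].
  rewrite assoc, IH; reflexivity.
Qed.

End Semigroup.

Section RectangularBandOfGroups.
Context {A : Type} (op : A -> A -> A) (B : A -> Prop)
  {I L : Type} (fi : A -> I) (fl : A -> L).
Local Notation "x ** y" := (op x y) (at level 40, left associativity).
Hypothesis assoc : associative_op op.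
Hypothesis B_mul : forall x y, B x -> B y -> B (x ** y).
Hypothesis fi_fl_mul :
  forall x y, B x -> B y -> fi (x ** y) = fi x /\ fl (x ** y) = fl y.

Definition block (b y : A) : Prop := B y /\ fi y = fi b /\ fl y = fl b.

Hypothesis block_group : forall b, B b -> periodic_comm_group op (block b).
Hypothesis idempotent_mul : forall e f, B e -> B f ->
  idempotent op e -> idempotent op f -> idempotent op (e ** f).

Lemma fi_mul x y : B x -> B y -> fi (x ** y) = fi x.
Proof. intros; apply fi_fl_mul; auto. Qed.

Lemma fl_mul x y : B x -> B y -> fl (x ** y) = fl y.
Proof. intros; apply fi_fl_mul; auto. Qed.

Lemma block_refl b : B b -> block b b.
Proof. repeat split; auto. Qed.

Lemma block_idempotent_unit b e : B b -> block b e -> idempotent op e ->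
  forall y, block b y -> e ** y = y /\ y ** e = y.
Proof.
  intros Bb be ee.
  destruct (block_group b Bb) as [_ [e0 [_ [unit0 [inv0 _]]]]].
  assert (e = e0) as <-.
  { destruct (inv0 e be) as [w [_ [ew _]]].
    rewrite <- (proj2 (unit0 e be)), <- ew, assoc, ee; reflexivity. }
  exact unit0.
Qed.

Lemma block_idempotent_exists b : B b ->
  exists e, block b e /\ idempotent op e.
Proof.
  intros Bb; destruct (block_group b Bb) as [_ [e [be [unit _]]]].
  exists e; split; [exact be | apply unit, be].
Qed.

Lemma block_idempotent_unique b e f : B b ->
  block b e -> idempotent op e -> block b f -> idempotent op f -> e = f.
Proof.
  intros Bb be ee bf ef.
  rewrite <- (proj2 (block_idempotent_unit b f Bb bf ef e be)).
  apply (block_idempotent_unit b e Bb be ee f bf).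
Qed.

(* Both [ea ** f ** eb] and [ea ** eb] are idempotents of one group. *)
Lemma idempotent_absorb a f b : B a -> B f -> B b -> idempotent op f ->
  a ** f ** b = a ** b.
Proof.
  intros Ba Bf Bb ff.
  destruct (block_idempotent_exists a Ba) as [ea [[Bea [fiea flea]] eea]].
  destruct (block_idempotent_exists b Bb) as [eb [[Beb [fieb fleb]] eeb]].
  assert (middle : ea ** f ** eb = ea ** eb).
  { apply (block_idempotent_unique (ea ** eb)); auto using block_refl.
    repeat split; auto; rewrite ?fi_mul, ?fl_mul; auto. }
  assert (Ha : a ** ea = a)
    by (apply (block_idempotent_unit a); repeat split; auto).
  assert (Hb : eb ** b = b)
    by (apply (block_idempotent_unit b); repeat split; auto).
  rewrite <- Ha at 1; rewrite <- Hb at 1.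
  rewrite !assoc, <- (assoc a ea f), <- (assoc a (ea ** f) eb), middle.
  rewrite assoc, Ha, <- assoc, Hb; reflexivity.
Qed.

(* [ec ** b ** ec] lies in the commutative group of [c]. *)
Lemma mul_swap_idempotent a b c ec : B a -> B b -> B c ->
  block c ec -> idempotent op ec -> a ** b ** c = a ** c ** b ** ec.
Proof.
  intros Ba Bb Bc bec eec; pose proof bec as [Bec [fiec flec]].
  destruct (block_group c Bc) as [_ [_ [_ [_ [_ [comm _]]]]]].
  destruct (block_idempotent_unit c ec Bc bec eec c (block_refl c Bc)) as [ecc cec].
  assert (Hcomm : c ** (ec ** b ** ec) = (ec ** b ** ec) ** c).
  { apply comm; [apply block_refl; auto|].
    repeat split; auto; rewrite ?fi_mul, ?fl_mul; auto. }
  assert (Hcb : c ** b ** ec = ec ** b ** c).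
  { rewrite <- cec at 1; rewrite <- (assoc c ec b), <- (assoc c (ec ** b) ec).
    rewrite Hcomm, <- (assoc (ec ** b) ec c), ecc; reflexivity. }
  rewrite <- (assoc a c b), <- (assoc a (c ** b) ec), Hcb.
  rewrite assoc, assoc, (idempotent_absorb a ec b); auto.
Qed.

Lemma subsemigroup_block_inverse (S : A -> Prop) b :
  (forall x y, S x -> S y -> S (x ** y)) -> S b -> B b ->
  exists w e, S w /\ B w /\ S e /\ block b e /\ idempotent op e /\
    b ** w = e /\ w ** b = e.
Proof.
  intros S_mul Sb Bb.
  destruct (block_group b Bb) as [block_mul [e [be [unit [_ [_ periodic]]]]]].
  destruct (periodic b (block_refl b Bb)) as [n bn].
  assert (Se : S e) by (rewrite <- bn; apply spow_closed; auto).
  assert (ee : idempotent op e) by apply unit, be.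
  pose proof be as [Be [fie fle]].
  destruct n as [|k]; simpl in bn.
  - subst b; exists e, e; repeat split; auto.
  - assert (bw : block b (spow op b k))
      by (apply spow_closed; auto using block_refl).
    exists (spow op b k), e; repeat split; auto.
    + apply spow_closed; auto.
    + apply bw.
    + rewrite spow_comm; auto.
Qed.

Section Inflation.
Variable r : A -> A.
Hypothesis r_in_B : forall x, B (r x).
Hypothesis r_id : forall b, B b -> r b = b.
Hypothesis mul_r : forall x y, x ** y = r x ** r y.

Lemma mul_in_B x y : B (x ** y).
Proof. rewrite mul_r; auto. Qed.

Lemma mul3_r u x v : u ** x ** v = r u ** r x ** r v.
Proof. rewrite mul_r, r_id, <- mul_r; [reflexivity | apply mul_in_B]. Qed.

(* [r x = x ** e] with [e] the identity of the group of [x ** x]. *)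
Lemma subsemigroup_r_closed (S : A -> Prop) x :
  (forall x y, S x -> S y -> S (x ** y)) -> S x -> S (r x).
Proof.
  intros S_mul Sx.
  destruct (subsemigroup_block_inverse S (x ** x)) as
    [_ [e [_ [_ [Se [[Be [fie fle]] [ee _]]]]]]]; auto using mul_in_B.
  assert (Hrx : r x ** e = r x).
  { apply (block_idempotent_unit (x ** x)); auto using mul_in_B.
    - repeat split; auto.
    - repeat split; auto; rewrite mul_r, ?fi_mul, ?fl_mul; auto. }
  rewrite <- Hrx, <- (r_id e Be), <- mul_r; auto.
Qed.

Section ContextStable.
Variables (S : A -> Prop) (x y : A).
Hypothesis S_mul : forall x y, S x -> S y -> S (x ** y).
Hypotheses (Sx : S x) (Sy : S y).

Lemma context_stable_left u : S (u ** x) -> S (u ** y).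
Proof.
  intros Sux.
  assert (Srx : S (r x)) by (apply subsemigroup_r_closed; auto).
  assert (Sry : S (r y)) by (apply subsemigroup_r_closed; auto).
  destruct (subsemigroup_block_inverse S (r x)) as
    [w [e [Sw [Bw [_ [[Be _] [ee [xw _]]]]]]]]; auto.
  replace (u ** y) with ((u ** x) ** (w ** r y)); [auto|].
  rewrite (mul_r u y), (mul_r u x), assoc, <- (assoc (r u) (r x) w), xw.
  apply idempotent_absorb; auto.
Qed.

Lemma context_stable_right v : S (x ** v) -> S (y ** v).
Proof.
  intros Sxv.
  assert (Srx : S (r x)) by (apply subsemigroup_r_closed; auto).
  assert (Sry : S (r y)) by (apply subsemigroup_r_closed; auto).
  destruct (subsemigroup_block_inverse S (r x)) as
    [w [e [Sw [Bw [_ [[Be _] [ee [_ wx]]]]]]]]; auto.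
  replace (y ** v) with ((r y ** w) ** (x ** v)); [auto|].
  rewrite (mul_r y v), (mul_r x v), assoc, <- (assoc (r y) w (r x)), wx.
  apply idempotent_absorb; auto.
Qed.

Lemma context_stable_both u v : S (u ** x ** v) -> S (u ** y ** v).
Proof.
  intros SP.
  assert (Srx : S (r x)) by (apply subsemigroup_r_closed; auto).
  assert (Sry : S (r y)) by (apply subsemigroup_r_closed; auto).
  destruct (subsemigroup_block_inverse S (r x)) as
    [w [e [Sw [Bw [_ [[Be _] [ee [xw _]]]]]]]]; auto.
  assert (BP : B (u ** x ** v)) by apply mul_in_B.
  destruct (subsemigroup_block_inverse S (u ** x ** v)) as
    [_ [eP [_ [_ [SeP [beP [eeP _]]]]]]]; auto.
  assert (Bt : B (w ** r y)) by auto.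
  destruct (block_idempotent_exists (w ** r y) Bt) as [et [bet eet]].
  pose proof bet as [Bet _].
  assert (BQ : B (u ** y ** v)) by apply mul_in_B.
  assert (HPt : (u ** x ** v) ** (w ** r y) = (u ** y ** v) ** et).
  { rewrite (mul3_r u x v), (mul3_r u y v).
    rewrite (mul_swap_idempotent (r u ** r x) (r v) (w ** r y) et); auto.
    rewrite !assoc, <- (assoc (r u) (r x) w), xw, (idempotent_absorb (r u) e (r y));
      auto. }
  assert (HQ : (u ** y ** v) ** et ** eP = u ** y ** v).
  { rewrite idempotent_absorb; auto; [|destruct beP; auto].
    apply (block_idempotent_unit (u ** x ** v)); auto.
    repeat split; auto; rewrite (mul3_r u x v), (mul3_r u y v), ?fi_mul, ?fl_mul;
      auto. }
  rewrite <- HQ, <- HPt; auto.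
Qed.

Lemma subsemigroup_context_stable u v :
  S (in_context op u v x) -> S (in_context op u v y).
Proof.
  destruct u, v; simpl;
    auto using context_stable_left, context_stable_right, context_stable_both.
Qed.

End ContextStable.
End Inflation.
End RectangularBandOfGroups.

Theorem mainTheorem18 (A : Type) (op : A -> A -> A) (B : A -> Prop) :
  associative_op op ->
  inflation_of op B ->
  rect_band_pcg op B ->
  (forall e f, idempotent op e -> idempotent op f -> idempotent op (op e f)) ->
  hamiltonian op.
Proof.
  intros assoc [B_mul [r [r_in_B [r_id mul_r]]]]
    [I [L [fi [fl [fi_fl_mul block_group]]]]] idempotent_mul.
  apply hamiltonian_of_context_stable; [exact assoc|].
  intros S [_ S_mul] x y u v Sx Sy.
  eapply subsemigroup_context_stable with (B := B) (r := r); eauto.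
Qed.
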